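(* For every integer $k\ge3$, $a_{k-1}(K_{1,2k})<a_k(K_{1,2k})$, where $K_{1,2k}$ is the star graph with $2k+1$ vertices.
   Context: All graphs are finite simple graphs; $G|_I$ is the induced subgraph on $I\subseteq V(G)$. The signed $a$-number: $sa(\emptyset)=1$; if $G$ has connected components $G_1,\dots,G_\ell$, $sa(G)=\prod_k sa(G_k)$; if $G$ is connected and nonempty, $sa(G)=-\sum_{I\subsetneq V(G)}sa(G|_I)$ when $|V(G)|$ is even and $0$ when odd. $a(G)=|sa(G)|$ and $a_i(G)=\sum_{I\subseteq V(G),|I|=2i}a(G|_I)$. The star graph $K_{1,m}$ has one center vertex adjacent to each of $m$ leaves and no other edges. *)

From HB Require Import structures.
From mathcomp Require Import all_boot all_order all_algebra.
Set Implicit Arguments. Unset Strict Implicit. Unset Printing Implicit Defensive.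
Import GRing.Theory Num.Theory.

(* A finite simple graph is given by a vertex type T : finType and an edge
   relation e : rel T, assumed symmetric and irreflexive (the star graph
   below satisfies this).  Induced subgraphs G|_S are represented by the
   vertex subset S : {set T}; induced subgraphs of induced subgraphs are
   again induced subgraphs of G, so all recursion happens on subsets. *)

Section SignedA.
Variables (T : finType) (e : rel T).

Definition induced_rel (S : {set T}) : rel T :=
  [rel x y | [&& x \in S, y \in S & e x y]].

(* G|_S is connected (the empty graph counts as connected; handled apart) *)
Definition connectedb (S : {set T}) : bool :=
  [forall x in S, forall y in S, connect (induced_rel S) x y].

Definition components (S : {set T}) : {set {set T}} :=
  [set [set y in S | connect (induced_rel S) x y] | x in S].

(* signed a-number with fuel; fuel #|S|.+1 is always sufficient *)
Fixpoint sa_fuel (n : nat) (S : {set T}) : int :=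
  match n with
  | 0 => 1
  | n'.+1 =>
    if S == set0 then 1
    else if connectedb S then
      (if odd #|S| then 0
       else - \sum_(I in powerset S | I != S) sa_fuel n' I)
    else \prod_(C in components S) sa_fuel n' C
  end%R.

Definition sa (S : {set T}) : int := sa_fuel #|S|.+1 S.

Definition a_num (S : {set T}) : nat := `|sa S|%N.

Definition a_i (i : nat) : nat :=
  \sum_(I : {set T} | #|I| == 2 * i) a_num I.

End SignedA.

(* The star graph K_{1,m}: vertices 'I_(m.+1), center ord0, m leaves. *)
Definition star_rel (m : nat) : rel 'I_m.+1 :=
  [rel x y | (x != y) && ((x == ord0) || (y == ord0))].
Arguments star_rel m : clear implicits.

From mathcomp Require Import all_boot all_order all_algebra.
From mathcomp Require Import zify ring lra.
Set Implicit Arguments. Unset Strict Implicit. Unset Printing Implicit Defensive.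
Import Order.TTheory GRing.Theory Num.Theory.
Local Open Scope ring_scope.

(* An induced subgraph of the star K_{1,m} containing the centre is a star
   K_{1,j}; one avoiding the centre is edgeless, so its signed a-number vanishes
   unless it is empty.  Hence a_{i+1}(K_{1,m}) = C(m, 2i+1) t_i with
   t_i = |sa(K_{1,2i+1})|, and the defining recursion of sa becomes an
   alternating sum t_n = sum_{r <= n} (-1)^(n-r) y_r, where y_0 = 1 and
   y_{r+1} = C(2n+1, 2r+1) t_r.  By strong induction the y_r increase (by a
   factor at least 3 in the last step), so t_n >= y_n - y_{n-1} >= 2/3 y_n,
   i.e. (2n+1)(2n) t_{n-1} <= 3 t_n.  For m = 2k this growth beats the binomial
   ratio C(2k, 2k-3) / C(2k, 2k-1) = (2k-1)(2k-2)/6 by a factor 2. *)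

Lemma big_ord_odd (R : nmodType) (f : nat -> R) n :
  (forall i, ~~ odd i -> f i = 0) ->
  \sum_(i < n.*2.+1) f i = \sum_(m < n) f m.*2.+1.
Proof.
move=> f_even0; elim: n => [|n IHn]; first by rewrite big_ord1 big_ord0 f_even0.
rewrite doubleS (big_ord_recr n.*2.+2) (big_ord_recr n.*2.+1) /= IHn.
by rewrite big_ord_recr /= (f_even0 n.*2.+2) ?addr0 //= odd_double.
Qed.

Lemma alt_sum_recr (R : pzRingType) (y : nat -> R) n :
  \sum_(r < n.+2) (-1) ^+ (n.+1 - r) * y r =
  y n.+1 - \sum_(r < n.+1) (-1) ^+ (n - r) * y r.
Proof.
rewrite big_ord_recr /= subnn expr0 mul1r addrC; congr (_ + _).
rewrite -sumrN; apply: eq_bigr => i _.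
by rewrite subSn ?exprS ?mulN1r ?mulNr // -ltnS.
Qed.

Lemma alt_sum_bounds (R : realDomainType) (y : nat -> R) n :
  (forall r, (r <= n)%N -> 0 <= y r) ->
  (forall r, (r < n)%N -> y r <= y r.+1) ->
  0 <= \sum_(r < n.+1) (-1) ^+ (n - r) * y r <= y n.
Proof.
elim: n => [|n IHn] y_ge0 y_nondecr.
  by rewrite big_ord1 subnn expr0 mul1r lexx andbT y_ge0.
rewrite alt_sum_recr.
have /andP[] : 0 <= \sum_(r < n.+1) (-1) ^+ (n - r) * y r <= y n.
  by apply: IHn => r le_rn; [apply: y_ge0 | apply: y_nondecr]; lia.
have := y_nondecr n (ltnSn n); lra.
Qed.

Lemma mul_bin_left2 N r :
  (r.+2 * r.+1 * 'C(N, r.+2) = (N - r) * (N - r.+1) * 'C(N, r))%N.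
Proof.
rewrite mulnAC mul_bin_left -mulnA (mulnC 'C(N, r.+1)) mul_bin_left.
by rewrite mulnA [((N - r.+1) * _)%N]mulnC.
Qed.

Lemma big_subset_setU1 (R : Type) (idx : R) (op : Monoid.com_law idx)
    (T : finType) (x : T) (L : {set T}) (P : pred {set T}) (F : {set T} -> R) :
  x \notin L ->
  \big[op/idx]_(I : {set T} | [&& I \subset x |: L, x \in I & P I]) F I =
  \big[op/idx]_(J : {set T} | (J \subset L) && P (x |: J)) F (x |: J).
Proof.
move=> xNL.
rewrite (reindex_onto (fun J => x |: J) (fun I => I :\ x)); last first.
  by move=> I /and3P[_ xI _]; rewrite setD1K.
apply: eq_bigl => J; rewrite setU11 /=; apply/idP/idP.
  case/andP=> /andP[sJxL PJ] /eqP eJ.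
  have xNJ : x \notin J by rewrite -eJ !inE eqxx.
  rewrite PJ andbT; apply/subsetP => z zJ.
  have : z \in x |: L by apply: (subsetP sJxL); rewrite !inE zJ orbT.
  by rewrite !inE; case/orP => [/eqP ez|//]; move: xNJ; rewrite -ez zJ.
case/andP => sJL PJ.
have xNJ : x \notin J by apply: contra xNL; apply: (subsetP sJL).
by rewrite setUS // PJ setU1K ?eqxx.
Qed.

Lemma sum_proper_subsets_card (R : pzSemiRingType) (T : finType) (L : {set T})
    (F : nat -> R) :
  \sum_(J : {set T} | (J \subset L) && (J != L)) F #|J| =
  \sum_(i < #|L|) 'C(#|L|, i)%:R * F i.
Proof.
have card_lt (J : {set T}) : (J \subset L) && (J != L) -> (#|J| < #|L|)%N.
  by case/andP=> sJL neJL; apply: proper_card; rewrite properEneq neJL sJL.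
transitivity (\sum_(J : {set T} | (J \subset L) && (J != L))
                 \sum_(i < #|L| | #|J| == i) F i).
  apply: eq_bigr => J /card_lt lt_JL.
  by rewrite (big_pred1 (Ordinal lt_JL)) // => i; rewrite eq_sym.
rewrite (exchange_big_dep predT) //=; apply: eq_bigr => i _.
rewrite mulr_natl -cards_draws -sumr_const.
apply: eq_bigl => J; rewrite inE andbAC.
have [card_J|] := eqP; last by rewrite !andbF.
rewrite !andbT; have [eq_JL|] := eqVneq J L; rewrite ?andbT //.
by have := ltn_ord i; rewrite -card_J eq_JL ltnn.
Qed.

Section InducedSubgraphs.
Variables (T : finType) (e : rel T).

Lemma connectedb_set1 x : connectedb e [set x].
Proof.
apply/forallP => y; apply/implyP; rewrite inE => /eqP ->.
by apply/forallP => z; apply/implyP; rewrite inE => /eqP ->; apply: connect0.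
Qed.

Lemma sa_fuelS n S : sa_fuel e n.+1 S =
  if S == set0 then 1
  else if connectedb e S then
    (if odd #|S| then 0 else - \sum_(I in powerset S | I != S) sa_fuel e n I)
  else \prod_(C in components e S) sa_fuel e n C.
Proof. by []. Qed.

Lemma sa_fuel_set1 n x : sa_fuel e n.+1 [set x] = 0.
Proof. by rewrite /= -cards_eq0 cards1 connectedb_set1. Qed.

End InducedSubgraphs.

(* sa(K_{1,j}): besides the empty graph, the proper induced subgraphs of
   K_{1,j} with nonzero signed a-number are the C(j, i) stars K_{1,i}, i < j. *)
Fixpoint star_sa_fuel (n j : nat) : int :=
  match n with
  | 0 => 0
  | n'.+1 =>
    if odd j then - (1 + \sum_(i < j) 'C(j, i)%:Z * star_sa_fuel n' i) else 0
  end.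

Definition star_sa (j : nat) : int := star_sa_fuel j.+1 j.

Lemma star_sa_fuel_eq n m j :
  (j < n)%N -> (j < m)%N -> star_sa_fuel n j = star_sa_fuel m j.
Proof.
elim: n m j => [|n IHn] [|m] j //= ltjn ltjm.
case: ifP => // _; congr (- (1 + _)); apply: eq_bigr => i _; congr (_ * _).
by apply: IHn; have := ltn_ord i; lia.
Qed.

Lemma star_sa_even j : ~~ odd j -> star_sa j = 0.
Proof. by rewrite /star_sa /= => /negbTE ->. Qed.

Lemma star_sa_odd j :
  odd j -> star_sa j = - (1 + \sum_(i < j) 'C(j, i)%:Z * star_sa i).
Proof.
rewrite /star_sa /= => ->; congr (- (1 + _)); apply: eq_bigr => i _.
by congr (_ * _); apply: (@star_sa_fuel_eq j i.+1 i).
Qed.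

(* The tangent numbers 1, 2, 16, 272, ... (the recursion says that the odd
   part of exp x * (1 + f x) vanishes for the e.g.f. f of star_sa, so
   f = - tanh); only the recursion is used below. *)
Definition tan_num (n : nat) : int := (-1) ^+ n.+1 * star_sa n.*2.+1.

Definition tan_term (n r : nat) : int :=
  if r is m.+1 then 'C(n.*2.+1, m.*2.+1)%:Z * tan_num m else 1.

Lemma tan_num_alt n :
  tan_num n = \sum_(r < n.+1) (-1) ^+ (n - r) * tan_term n r.
Proof.
rewrite big_ord_recl /= subn0 /tan_num star_sa_odd /= ?odd_double //.
rewrite (big_ord_odd (f := fun i => 'C(n.*2.+1, i)%:Z * star_sa i)); last first.
  by move=> i /star_sa_even ->; rewrite mulr0.
rewrite exprS mulN1r mulrNN mulrDr mulr1 mulr_sumr; congr (_ + _).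
apply: eq_bigr => i _; rewrite /tan_term /bump /= add1n.
have -> : (-1) ^+ n = (-1) ^+ (n - i.+1) * (-1) ^+ i.+1 :> int.
  by rewrite -exprD subnK.
rewrite /tan_num add0n; ring.
Qed.

Section TanNumStep.
Variable n : nat.
Hypothesis tan_num_spec_lt : forall m, (m < n)%N ->
  0 < tan_num m /\ (m.*2.+1 * m.*2)%:Z * tan_num m.-1 <= 3 * tan_num m.

Lemma tan_term_ge0 r : (r <= n)%N -> 0 <= tan_term n r.
Proof.
case: r => [|m] lt_mn //=.
by rewrite mulr_ge0 // ltW //; case: (tan_num_spec_lt lt_mn).
Qed.

Lemma tan_term_ratio m : (m.+1 < n)%N -> 4 * tan_term n m.+1 <= tan_term n m.+2.
Proof.
move=> lt_mn; rewrite /tan_term.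
have [_ growth] := tan_num_spec_lt lt_mn.
have [um_gt0 _] := tan_num_spec_lt (ltnW lt_mn).
have bin_eq := mul_bin_left2 n.*2.+1 m.*2.+1.
have Q_ge12 : (12 <= (n.*2.+1 - m.*2.+1) * (n.*2.+1 - m.*2.+2))%N by nia.
move: growth bin_eq Q_ge12; rewrite !doubleS /=.
set C1 := 'C(_, m.*2.+1); set C3 := 'C(_, m.*2.+3).
set Q := ((_ - m.*2.+1) * _)%N => growth /(congr1 Posz) bin_eq Q_ge12.
rewrite !PoszM in bin_eq.
have C1_ge0 : 0 <= C1%:Z by [].
nia.
Qed.

Lemma tan_term_nondecr r : (r < n)%N -> tan_term n r <= tan_term n r.+1.
Proof.
case: r => [|m] lt_mn.
  have [u0_gt0 _] := tan_num_spec_lt lt_mn.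
  rewrite /tan_term bin1 mulr_ege1 // ?lez_nat // -gtz0_ge1 //.
have := tan_term_ratio lt_mn; have := tan_term_ge0 (ltnW lt_mn); lia.
Qed.

Lemma tan_term_last m : n = m.+1 -> 3 * tan_term n m <= tan_term n m.+1.
Proof.
move=> def_n; case: m def_n => [|m] def_n.
  have lt0n : (0 < n)%N by rewrite def_n.
  have [u0_gt0 _] := tan_num_spec_lt lt0n.
  by rewrite def_n /tan_term bin1 mulr1 ler_pMr // -gtz0_ge1.
have lt_mn : (m.+1 < n)%N by rewrite def_n.
have := tan_term_ratio lt_mn; have := tan_term_ge0 (ltnW lt_mn); lia.
Qed.

Lemma tan_num_step :
  0 < tan_num n /\ (n.*2.+1 * n.*2)%:Z * tan_num n.-1 <= 3 * tan_num n.
Proof.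
case: n tan_num_spec_lt tan_term_ge0 tan_term_nondecr tan_term_last
  => [|m] IH y_ge0 y_nondecr y_last.
  by rewrite tan_num_alt big_ord1 subnn expr0 mul1r /tan_term; split.
have y_bounds := @alt_sum_bounds _ (tan_term m.+1) m
  (fun r le_rm => y_ge0 r (leqW le_rm))
  (fun r lt_rm => y_nondecr r (ltnW lt_rm)).
have um_gt0 : 0 < tan_num m by case: (IH m (ltnSn m)).
have lower : tan_term m.+1 m.+1 - tan_term m.+1 m <= tan_num m.+1.
  by rewrite tan_num_alt alt_sum_recr; case/andP: y_bounds => _; lra.
have {}y_last := y_last m erefl.
have bin_eq : (m.+1.*2.+1 * m.+1.*2 = 2 * 'C(m.+1.*2.+1, m.*2.+1))%N.
  have := mul_bin_left2 m.+1.*2.+1 m.*2.+1; rewrite doubleS binn !subSS.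
  have -> : (m.*2.+2 - m.*2 = 2)%N by lia.
  by rewrite subSnn muln1 => ->.
have C_gt0 : (0 < 'C(m.+1.*2.+1, m.*2.+1))%N by rewrite bin_gt0 doubleS; lia.
have y_eq : tan_term m.+1 m.+1 = 'C(m.+1.*2.+1, m.*2.+1)%:Z * tan_num m by [].
have y_gt0 : 0 < tan_term m.+1 m.+1 by rewrite y_eq mulr_gt0 // ltz_nat.
split; first lia.
by rewrite /= bin_eq PoszM; lia.
Qed.

End TanNumStep.

Lemma tan_num_spec n :
  0 < tan_num n /\ (n.*2.+1 * n.*2)%:Z * tan_num n.-1 <= 3 * tan_num n.
Proof. by elim/ltn_ind: n => n IHn; apply: tan_num_step. Qed.

Lemma tan_num_gt0 n : 0 < tan_num n.
Proof. exact: (tan_num_spec n).1. Qed.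

Lemma tan_num_growth n : (n.*2.+3 * n.*2.+2)%:Z * tan_num n <= 3 * tan_num n.+1.
Proof. by have [_] := tan_num_spec n.+1; rewrite doubleS. Qed.

Section Star.
Variable m : nat.
Local Notation center := (ord0 : 'I_m.+1).
Local Notation star_conn S := (connect (induced_rel (star_rel m) S)).

Definition sa_star (S : {set 'I_m.+1}) : int :=
  if center \in S then star_sa #|S|.-1 else (S == set0)%:R.

Lemma star_connectedb (S : {set 'I_m.+1}) :
  center \in S -> connectedb (star_rel m) S.
Proof.
move=> S0.
have to_center x : x \in S -> star_conn S x center /\ star_conn S center x.
  move=> xS; have [->|x_ne0] := eqVneq x center.
    by split; apply: connect0.
  split; apply: connect1; rewrite /induced_rel /star_rel /= xS S0.
    by rewrite x_ne0 eqxx orbT.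
  by rewrite eq_sym x_ne0.
apply/forallP => x; apply/implyP => xS; apply/forallP => y; apply/implyP => yS.
exact: connect_trans (to_center x xS).1 (to_center y yS).2.
Qed.

Lemma star_conn_leaves (S : {set 'I_m.+1}) x y :
  center \notin S -> star_conn S x y -> x = y.
Proof.
move=> S0 /connectP[[|z p] //= /andP[/and3P[xS zS /andP[_ x0_z0]] _] ->].
by case/orP: x0_z0 => /eqP e0; [rewrite -e0 xS in S0 | rewrite -e0 zS in S0].
Qed.

Lemma sa_fuel_star_leaves n (S : {set 'I_m.+1}) :
  center \notin S -> S != set0 -> (#|S| < n)%N -> sa_fuel (star_rel m) n S = 0.
Proof.
move=> S0 S_neq0; have [x xS] := set0Pn _ S_neq0.
have S_gt0 : (0 < #|S|)%N by rewrite card_gt0.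
case: n => [|[|n]] lt_Sn //; first by lia.
rewrite sa_fuelS (negbTE S_neq0); case: ifP => [S_conn | _].
  suff -> : S = [set x] by rewrite cards1.
  apply/setP => y; rewrite inE; apply/idP/eqP => [yS|->//].
  apply/esym/(star_conn_leaves S0).
  by move/forallP: S_conn => /(_ x)/implyP/(_ xS)/forallP/(_ y)/implyP/(_ yS).
have comp_x : [set y in S | star_conn S x y] = [set x].
  apply/setP => y; rewrite !inE.
  by apply/andP/eqP => [[_ /(star_conn_leaves S0)] | ->].
have x_comp : [set x] \in components (star_rel m) S by rewrite -comp_x imset_f.
by rewrite (bigD1 [set x]) // sa_fuel_set1 /= mul0r.
Qed.

Lemma sum_sa_star_proper (S : {set 'I_m.+1}) : center \in S ->
  \sum_(I in powerset S | I != S) sa_star I =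
  1 + \sum_(i < #|S|.-1) 'C(#|S|.-1, i)%:Z * star_sa i.
Proof.
move=> S0; set L := S :\ center.
have def_S : S = center |: L by rewrite setD1K.
have L0 : center \notin L by rewrite !inE eqxx.
have card_L : #|L| = #|S|.-1 by rewrite (cardsD1 center S) S0.
rewrite (bigID (fun I : {set 'I_m.+1} => center \in I)) /= addrC; congr (_ + _).
  rewrite (bigD1 set0) /=; last first.
    by rewrite powersetE sub0set eq_sym -card_gt0 (cardsD1 center) S0 inE.
  rewrite {1}/sa_star inE eqxx big1 ?addr0 // => I /andP[/andP[_ I0] I_neq0].
  by rewrite /sa_star (negbTE I0) (negbTE I_neq0).
rewrite (eq_bigl (fun I : {set 'I_m.+1} =>
    [&& I \subset center |: L, center \in I & I != center |: L])); last first.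
  by move=> I; rewrite powersetE -def_S -andbA [(I != S) && _]andbC.
rewrite big_subset_setU1 // -card_L.
under [RHS]eq_bigr do rewrite -natz.
rewrite -sum_proper_subsets_card.
apply: eq_big => [J | J /andP[sJL _]].
  case sJL: (J \subset L) => //=; congr negb.
  have J0 := contra (subsetP sJL center) L0.
  by apply/eqP/eqP => [eJL | -> //]; rewrite -(setU1K J0) eJL setU1K.
by rewrite /sa_star setU11 cardsU1 (contra (subsetP sJL center) L0).
Qed.

Lemma sa_fuel_star n (S : {set 'I_m.+1}) :
  (#|S| < n)%N -> sa_fuel (star_rel m) n S = sa_star S.
Proof.
elim: n S => [|n IHn] S // lt_Sn.
have [S0 | S0] := boolP (center \in S); last first.
  have [->|S_neq0] := eqVneq S set0.
    by rewrite sa_fuelS /sa_star inE eqxx.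
  by rewrite sa_fuel_star_leaves // /sa_star (negbTE S0) (negbTE S_neq0).
have S_neq0 : S != set0 by apply/set0Pn; exists center.
have S_gt0 : (0 < #|S|)%N by rewrite card_gt0.
rewrite sa_fuelS (negbTE S_neq0) star_connectedb // /sa_star S0.
rewrite -(prednK S_gt0) /=; case: ifP => [odd_S | /negbFE odd_S].
  by rewrite star_sa_even ?odd_S.
rewrite (star_sa_odd odd_S) -sum_sa_star_proper //; congr (- _).
apply: eq_bigr => I /andP[sIS I_neq_S]; apply: IHn.
rewrite -ltnS; apply: leq_trans _ lt_Sn; rewrite ltnS; apply: proper_card.
by rewrite properEneq I_neq_S -powersetE.
Qed.

Lemma a_i_star i :
  a_i (star_rel m) i.+1 = ('C(m, i.*2.+1) * `|star_sa i.*2.+1|)%N.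
Proof.
rewrite /a_i /a_num.
under eq_bigr => I _ do rewrite /sa sa_fuel_star //.
rewrite (bigID (fun I : {set 'I_m.+1} => center \in I)) /=.
rewrite [X in (_ + X)%N]big1 ?addn0; last first.
  move=> I /andP[/eqP card_I I0]; rewrite /sa_star (negbTE I0).
  by rewrite -cards_eq0 card_I mul2n doubleS.
set L := [set~ center].
have L0 : center \notin L by rewrite !inE eqxx.
rewrite (eq_bigl (fun I : {set 'I_m.+1} =>
    [&& I \subset center |: L, center \in I & #|I| == (2 * i.+1)%N]));
  last by move=> I; rewrite setUCr subsetT andbC.
rewrite big_subset_setU1 //.
rewrite (eq_big (fun J : {set 'I_m.+1} => (J \subset L) && (#|J| == i.*2.+1))
                (fun _ => `|star_sa i.*2.+1|%N)); first last.
- move=> J /andP[_ /eqP card_J].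
  by rewrite /sa_star setU11 card_J mul2n doubleS.
- move=> J; case sJL: (J \subset L) => //=.
  by rewrite cardsU1 (contra (subsetP sJL center) L0) mul2n doubleS eqSS.
by rewrite sum_nat_cond_const cards_draws cardsC1 card_ord mulnC.
Qed.

End Star.

Lemma abs_star_sa n : `|star_sa n.*2.+1|%N = tan_num n :> int.
Proof.
rewrite abszE -[RHS]gtr0_norm ?tan_num_gt0 //.
by rewrite /tan_num normrM normrX normrN1 expr1n mul1r.
Qed.

Lemma tan_num_binom_lt n :
  'C(n.*2.+4, n.*2.+1)%:Z * tan_num n < 'C(n.*2.+4, n.*2.+3)%:Z * tan_num n.+1.
Proof.
have growth := tan_num_growth n; have un_gt0 := tan_num_gt0 n.
have := mul_bin_left2 n.*2.+4 n.*2.+1.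
have -> : (n.*2.+4 - n.*2.+1 = 3)%N by lia.
have -> : (n.*2.+4 - n.*2.+2 = 2)%N by lia.
have C3_gt0 : (0 < 'C(n.*2.+4, n.*2.+3))%N by rewrite bin_gt0; lia.
move: growth C3_gt0; set C1 := 'C(_, n.*2.+1); set C3 := 'C(_, n.*2.+3).
move=> growth C3_gt0 /(congr1 Posz); rewrite !PoszM => bin_eq.
nia.
Qed.

Local Close Scope ring_scope.

Theorem mainTheorem12 (k : nat) (hk : 3 <= k) :
  a_i (star_rel (2 * k)) k.-1 < a_i (star_rel (2 * k)) k.
Proof.
have [n ->] : exists n, k = n.+2 by exists k.-2; lia.
have -> : 2 * n.+2 = n.*2.+4 by rewrite mul2n.
by rewrite /= !a_i_star -ltz_nat !PoszM !abs_star_sa tan_num_binom_lt.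
Qed.
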